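(* Let $A$ be a finite abelian group of even order, let $T$ be a square-free subset of $A$, and let $X\subseteq A$ be inverse-closed (i.e. $-X=X$). Then $X$ is a perfect code of $\mathrm{CayS}(A,T)$ if and only if $A=X\oplus T^0$, where $T^0=T\cup\{0\}$.
   Context: $A$ is written additively with identity $0$. An element $x$ of $A$ is a square if $x=2y$ for some $y\in A$; a subset is square-free if it contains no squares. For a square-free $T\subseteq A$, the Cayley sum graph $\mathrm{CayS}(A,T)$ is the simple graph with vertex set $A$ in which distinct $x,y$ are adjacent iff $x+y\in T$. A subset $C$ of the vertex set of a graph is a perfect code if every vertex is at distance at most one from exactly one vertex of $C$. For subsets $M,N\subseteq A$, we write $A=M\oplus N$ if every element $a\in A$ can be written in a unique way as $a=m+n$ with $m\in M$, $n\in N$. *)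

From mathcomp Require Import all_boot all_order all_algebra.
Set Implicit Arguments. Unset Strict Implicit. Unset Printing Implicit Defensive.
Import GRing.Theory.
Local Open Scope ring_scope.

Section CaySum.
Variable A : finZmodType.

Definition is_square (x : A) : Prop := exists y : A, x = y *+ 2.

Definition square_free (T : {set A}) : Prop :=
  forall x, x \in T -> ~ is_square x.

Definition cays_adj (T : {set A}) (x y : A) : bool := (x != y) && (x + y \in T).

Definition cays_ball (T : {set A}) (v : A) : {set A} :=
  [set c | (c == v) || cays_adj T v c].

Definition perfect_code (T : {set A}) (C : {set A}) : Prop :=
  forall v : A, #|C :&: cays_ball T v| = 1%N.

Definition direct_sum_decomp (M N : {set A}) : Prop :=
  forall a : A, exists! p : A * A, [/\ p.1 \in M, p.2 \in N & a = p.1 + p.2].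

Definition inverse_closed (X : {set A}) : Prop :=
  [set - x | x in X] = X.

End CaySum.

From mathcomp Require Import all_boot all_order all_algebra.
Local Open Scope ring_scope.
Import GRing.Theory.

(* For a vertex v both conditions count the elements of X in a set v |: S:
   for the perfect code S is the neighbourhood [set c | v + c \in T], for
   the decomposition S is [set x | v - x \in T].  Square-freeness keeps v out
   of both sets (v + v and 0 are squares), negation maps the second onto the
   first, and since X is inverse-closed negation preserves the count. *)

Section PerfectCodeDirectSum.
Variable A : finZmodType.
Implicit Types (T X S : {set A}) (v : A).

Lemma square_free_double T x : square_free T -> x *+ 2 \notin T.
Proof. by move=> HT; apply/negP => /HT; apply; exists x. Qed.

Lemma inverse_closed_image X S :
  inverse_closed X -> X :&: [set - x | x in S] = [set - x | x in X :&: S].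
Proof. by move=> HX; rewrite imsetI ?HX //; apply: in2W; apply: oppr_inj. Qed.

Lemma card_setIU1 X S v :
  v \notin S -> #|X :&: (v |: S)| = ((v \in X) + #|X :&: S|)%N.
Proof.
move=> vNS; rewrite setIUr; case: (boolP (v \in X)) => vX.
  by rewrite (setIidPr _) ?sub1set // cardsU1 inE (negbTE vNS) andbF.
by rewrite disjoint_setI0 ?set0U // disjoint_sym disjoints1.
Qed.

Lemma cays_ballE T v : cays_ball T v = v |: [set c | v + c \in T].
Proof. by apply/setP => c; rewrite !inE /cays_adj eq_sym; case: eqP. Qed.

Lemma cays_neighbours_opp T v :
  [set c | v + c \in T] = [set - x | x in [set x | v - x \in T]].
Proof. by rewrite (can_imset_pre _ opprK); apply/setP => c; rewrite !inE opprK. Qed.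

Lemma direct_sum_decompP X N :
  direct_sum_decomp X N <-> forall a, #|[set x in X | a - x \in N]| = 1%N.
Proof.
split=> [H a | H a].
- have [[m n] [[/= Xm Nn ->] uniq_mn]] := H a.
  apply/eqP/cards1P; exists m; apply/setP => x; rewrite !inE.
  apply/andP/eqP => [[Xx Nx] | ->]; last by rewrite addrC addKr.
  have split_x : m + n = x + (m + n - x) by rewrite addrCA subrr addr0.
  by have [] := uniq_mn (x, m + n - x) (And3 Xx Nx split_x).
- have /eqP/cards1P [m Hm] := H a.
  have := set11 m; rewrite -Hm inE => /andP [Xm Nm].
  exists (m, a - m); split=> [|[x n] [/= Xx Nn def_a]].
    by split=> //=; rewrite addrCA subrr addr0.
  have : x \in [set y in X | a - y \in N] by rewrite inE Xx def_a addrC addKr.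
  by rewrite Hm inE def_a => /eqP ->; rewrite addrC addKr.
Qed.

Lemma card_setI_cays_ball T X v :
  square_free T -> inverse_closed X ->
  #|X :&: cays_ball T v| = #|[set x in X | v - x \in 0 |: T]|.
Proof.
move=> HT HX.
have vNnbhd : v \notin [set c | v + c \in T].
  by rewrite inE -mulr2n square_free_double.
have vNsub : v \notin [set x | v - x \in T].
  by rewrite inE subrr -(mul0rn _ 2) square_free_double.
have -> : [set x in X | v - x \in 0 |: T] = X :&: (v |: [set x | v - x \in T]).
  by apply/setP => x; rewrite !inE subr_eq0 eq_sym.
rewrite cays_ballE !card_setIU1 // cays_neighbours_opp inverse_closed_image //.
by rewrite card_imset //; apply: oppr_inj.
Qed.

End PerfectCodeDirectSum.

Theorem corollary2p6 (A : finZmodType) (T X : {set A}) :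
  ~~ odd #|A| ->
  square_free T ->
  inverse_closed X ->
  (perfect_code T X <-> direct_sum_decomp X (0 |: T)).
Proof.
move=> _ HT HX; split=> [H | /direct_sum_decompP H v].
- by apply/direct_sum_decompP => v; rewrite -card_setI_cays_ball //; apply: H.
- by rewrite card_setI_cays_ball //; apply: H.
Qed.
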